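(* Let $G=(V,E)$ be a finite graph with couplings $J_e>0$ and $t_e=\tanh(J_e)$. Fix $A,B\subset V$ with $|A|,|B|$ even. Let $\Omega=\{0,1\}^E$, $\Sigma=\{F\subset E\mid \partial F=A\}$, $f:\Omega\to2^\Sigma$, $f(\omega)=\{F\subset\omega\mid\partial F=A\}$, and $$\rho[\omega]\propto \mathbf{1}[\omega\in\mathcal{F}_A]\,(\ell^{A\triangle B}_t\cup\mathbb{P}_{t^2})[\omega]\ (\omega\in\Omega),\qquad\gamma[\eta]\propto1\ (\eta\in\Sigma).$$ Let $\mathscr{P}$ be the probability measure on $\Omega\times\Sigma$ with $\mathscr{P}[\omega,\eta]\propto\rho[\omega]\gamma[\eta]\mathbf{1}[\eta\in f(\omega)]$. Then: (a) The marginal of $\mathscr{P}$ on $\Sigma$ is $\ell^A_t$. For each $\omega\in\mathcal{F}_A\cap\mathcal{F}_B$, the conditional measure $\mathscr{P}[\cdot\mid\omega]$ is the uniform measure on $\{F\subset\omega\mid\partial F=A\}$. (b) The marginal of $\mathscr{P}$ on $\Omega$ is the double random current $\mathbf{P}^{A,B}_J$. For each $\eta\in\Sigma$, the conditional measure $\mathscr{P}[\cdot\mid\eta]$ is $\ell^B_t\cup\mathbb{P}_{t^2}\cup\delta_\eta$. In particular, the uniform subgraph with sources $A$ of a sample of the double random current with sources $A$ and $B$ has law $\ell^A_t$.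
   Context: Configurations $\omega\in\{0,1\}^E$ are identified with their sets of open edges. For $F\subset E$, $\partial F$ is the set of vertices of odd degree in $(V,F)$; $\mathcal{F}_A=\{\omega\subset E\mid\exists F\subset\omega,\ \partial F=A\}$. For positive weights $x=(x_e)$, $\ell^C_x[\omega]\propto\prod_{e\in\omega}x_e\,\mathbf{1}[\partial\omega=C]$ (loop $\mathrm{O}(1)$ model with sources $C$). $\mathbb{P}_{t^2}$ is Bernoulli percolation on $E$ with edge $e$ open independently with probability $t_e^2$; $\delta_\eta$ is the Dirac mass at $\eta$. For measures $\pi,\nu$ on $\{0,1\}^E$, $\pi\cup\nu$ is the law of the union of the open edges of independent samples of $\pi$ and $\nu$. The single random current $\mathbf{P}^C_J$ is the law of $\{e:n_e>0\}$ where $(n_e)$ are independent Poisson$(J_e)$ conditioned on the set of vertices $v$ with $\sum_{e\ni v}n_e$ odd being $C$; the double random current $\mathbf{P}^{A,B}_J$ is the law of the union of independent samples of $\mathbf{P}^A_J$ and $\mathbf{P}^B_J$. *)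

From HB Require Import structures.
From mathcomp Require Import all_boot all_order all_algebra.
From mathcomp Require Import all_classical all_reals all_analysis.
Set Implicit Arguments. Unset Strict Implicit. Unset Printing Implicit Defensive.
Import Order.TTheory GRing.Theory Num.Theory.
Local Open Scope ring_scope.

Section Defs.
Variables (R : realType) (V E : finType) (ends : E -> {set V}).

Definition tanh (x : R) : R := (expR x - expR (- x)) / (expR x + expR (- x)).

Definition deg (F : {set E}) (v : V) : nat := #|[set e in F | v \in ends e]|.
Definition bdry (F : {set E}) : {set V} := [set v | odd (deg F v)].

Definition FA (A : {set V}) (w : {set E}) : bool :=
  [exists F : {set E}, (F \subset w) && (bdry F == A)].

(* measures on Omega = {0,1}^E, identified with subsets of E *)
Definition normalize (m : {set E} -> R) : {set E} -> R :=
  fun w => m w / \sum_(w' : {set E}) m w'.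

Definition loopO (x : E -> R) (C : {set V}) : {set E} -> R :=
  normalize (fun w => (bdry w == C)%:R * \prod_(e in w) x e).

Definition bernoulli (p : E -> R) : {set E} -> R :=
  fun w => \prod_(e in w) p e * \prod_(e in ~: w) (1 - p e).

Definition pdirac (eta : {set E}) : {set E} -> R := fun w => (w == eta)%:R.

Definition munion (pi nu : {set E} -> R) : {set E} -> R :=
  fun w => \sum_(w1 : {set E}) \sum_(w2 : {set E}) ((w1 :|: w2) == w)%:R * pi w1 * nu w2.

(* single random current: independent Poisson(J_e) variables n, conditioned
   on the set of odd-degree vertices being C; law of the support of n *)
Definition cbdry (n : {ffun E -> nat}) : {set V} :=
  [set v | odd (\sum_(e | v \in ends e) n e)].
Definition csupp (n : {ffun E -> nat}) : {set E} := [set e | n e != 0%N].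
Definition poisson_w (J : E -> R) (n : {ffun E -> nat}) : R :=
  \prod_(e : E) (expR (- J e) * J e ^+ n e / (n e)`!%:R).
Definition current (J : E -> R) (C : {set V}) : {set E} -> R :=
  fun w =>
    fine (esum [set n : {ffun E -> nat} | csupp n = w /\ cbdry n = C]
              (fun n => (poisson_w J n)%:E))
  / fine (esum [set n : {ffun E -> nat} | cbdry n = C]
              (fun n => (poisson_w J n)%:E)).

Definition dcurrent (J : E -> R) (A B : {set V}) : {set E} -> R :=
  munion (current J A) (current J B).

Definition fsub (A : {set V}) (w : {set E}) : {set {set E}} :=
  [set F : {set E} | (F \subset w) && (bdry F == A)].

Definition Sigma (A : {set V}) : {set {set E}} := [set F : {set E} | bdry F == A].
Definition gamma (A : {set V}) (eta : {set E}) : R :=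
  (eta \in Sigma A)%:R / #|Sigma A|%:R.

Definition rho (t : E -> R) (A B : {set V}) : {set E} -> R :=
  normalize (fun w => (FA A w)%:R *
     munion (loopO t ((A :\: B) :|: (B :\: A))) (bernoulli (fun e => t e ^+ 2)) w).

Definition coupling (t : E -> R) (A B : {set V}) : {set E} * {set E} -> R :=
  fun p => (rho t A B p.1 * gamma A p.2 * (p.2 \in fsub A p.1)%:R) /
    \sum_(q : {set E} * {set E}) (rho t A B q.1 * gamma A q.2 * (q.2 \in fsub A q.1)%:R).

Definition margO (P : {set E} * {set E} -> R) (w : {set E}) : R :=
  \sum_(eta : {set E}) P (w, eta).
Definition margS (P : {set E} * {set E} -> R) (eta : {set E}) : R :=
  \sum_(w : {set E}) P (w, eta).
(* conditional laws P[. | omega] (on eta) and P[. | eta] (on omega) *)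
Definition condO (P : {set E} * {set E} -> R) (w : {set E}) : {set E} -> R :=
  fun eta => P (w, eta) / margO P w.
Definition condS (P : {set E} * {set E} -> R) (eta : {set E}) : {set E} -> R :=
  fun w => P (w, eta) / margS P eta.

Definition unif (S : {set {set E}}) : {set E} -> R :=
  fun eta => (eta \in S)%:R / #|S|%:R.

End Defs.

From HB Require Import structures.
From mathcomp Require Import all_boot all_order all_algebra.
From mathcomp Require Import all_classical all_reals all_analysis.
From mathcomp Require Import ring lra.
Import Order.TTheory GRing.Theory Num.Theory.
Import numFieldNormedType.Exports.
Set Implicit Arguments. Unset Strict Implicit. Unset Printing Implicit Defensive.
Local Open Scope ring_scope.

(* Every law in the statement has an explicit unnormalised weight, and two
   probability measures proportional to the same weight coincide, so no
   normalising constant ever has to be computed.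

   Sorting a Poisson current by the parity of each edge, the current with
   sources C and support w has weight  sum_(bdry u = C) prod_e h_e(w_e, u_e)
   (the esum over {ffun E -> nat} is a limit of sums over finite boxes, and
   each edge contributes a cosh/sinh series).  Edge by edge, two independent
   currents with parity sets u1, u2 whose supports have union w weigh, up to a
   constant, as much as the loop configuration u1 (+) u2 with weight t = tanh J
   united with a Bernoulli(t^2) edge, subject to u1 <= w: this is
   cosh^2 - sinh^2 = 1.  Hence the coupling weighs
   W(w) * 1[eta <= w, bdry eta = A], with W the weight of
   loop^(A (+) B) u P_(t^2).  Summing over eta gives #{eta} * W(w), the double
   current; summing over w after the shift u |-> u (+) eta, which turns the
   sources A (+) B into B, gives t^eta * Z_B, the loop measure with sources A;
   the conditional laws follow by dividing. *)

Section SymmetricDifference.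
Variable T : finType.
Implicit Types X Y : {set T}.

Definition symd X Y : {set T} := (X :\: Y) :|: (Y :\: X).

Lemma in_symd X Y x : (x \in symd X Y) = (x \in X) (+) (x \in Y).
Proof. by rewrite !inE; case: (x \in X); case: (x \in Y). Qed.

Lemma symdC X Y : symd X Y = symd Y X.
Proof. by apply/setP => x; rewrite !in_symd addbC. Qed.

Lemma symdK Y : cancel (symd^~ Y) (symd^~ Y).
Proof. by move=> X; apply/setP => x; rewrite !in_symd -addbA addbb addbF. Qed.

Lemma symd_inj Y : injective (symd^~ Y).
Proof. exact: can_inj (symdK Y). Qed.

Lemma odd_card_symd X Y : odd #|symd X Y| = odd #|X| (+) odd #|Y|.
Proof.
have disjXY : [disjoint X :\: Y & Y :\: X].
  by apply/pred0P => x /=; rewrite !inE; case: (x \in X); case: (x \in Y).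
have cardU : #|symd X Y| = (#|X :\: Y| + #|Y :\: X|)%N.
  by apply/eqP; rewrite (leq_card_setU _ _).2.
rewrite cardU -(cardsID Y X) -(cardsID X Y).
by rewrite (finset.setIC Y X) !oddD addbACA addbb.
Qed.

End SymmetricDifference.

Lemma sum_indicator (R : semiRingType) (T : finType) (S : {set T}) :
  \sum_(i : T) (i \in S)%:R = #|S|%:R :> R.
Proof. by rewrite -sumr_const [RHS]big_mkcond; apply: eq_bigr => i _; case: (i \in S). Qed.

Section SubsetSums.
Variables (R : comRingType) (E : finType).

Lemma sum_subsets_prod (G : E -> bool -> R) :
  \sum_(S : {set E}) \prod_(e : E) G e (e \in S) = \prod_(e : E) (G e true + G e false).
Proof.
rewrite bigA_distr; apply: eq_bigr => S _; apply: eq_bigr => e _.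
by case: (e \in S).
Qed.

Lemma eqset_indicator (X Y : {set E}) :
  ((X == Y)%:R : R) = \prod_(e : E) ((e \in X) == (e \in Y))%:R.
Proof.
have [->|neXY] := eqVneq X Y; first by rewrite big1 // => e _; rewrite eqxx.
have [e He] : exists e, (e \in X) != (e \in Y).
  apply/existsP; apply: contraR neXY; rewrite negb_exists => /forallP eqXY.
  by apply/eqP/setP => e; apply/eqP; have := eqXY e; rewrite negbK.
by rewrite (bigD1 e) //= (negbTE He) mul0r.
Qed.

Lemma subset_indicator (X Y : {set E}) :
  ((X \subset Y)%:R : R) = \prod_(e : E) ((e \in X) ==> (e \in Y))%:R.
Proof.
have [/fintype.subsetP sXY|nsXY] := boolP (X \subset Y).
  by rewrite big1 // => e _; have [/sXY ->|] := boolP (e \in X).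
have [e He] : exists e, ~~ ((e \in X) ==> (e \in Y)).
  apply/existsP; apply: contraR nsXY; rewrite negb_exists => /forallP sXY.
  by apply/fintype.subsetP => x; have := sXY x; rewrite negbK => /implyP.
by rewrite (bigD1 e) //= (negbTE He) mul0r.
Qed.

Lemma sum_subsets2_prod (G : E -> bool -> bool -> R) :
  \sum_(S1 : {set E}) \sum_(S2 : {set E}) \prod_(e : E) G e (e \in S1) (e \in S2) =
  \prod_(e : E) \sum_(b1 : bool) \sum_(b2 : bool) G e b1 b2.
Proof.
rewrite (eq_bigr (fun S1 : {set E} => \prod_(e : E) (G e (e \in S1) true + G e (e \in S1) false))).
  rewrite (sum_subsets_prod (fun e b1 => G e b1 true + G e b1 false)).
  by apply: eq_bigr => e _; rewrite !big_bool.
by move=> S1 _; rewrite (sum_subsets_prod (fun e b => G e (e \in S1) b)).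
Qed.

Lemma sum_union_expand (G1 G2 : E -> bool -> bool -> R) (c1 c2 : {set E} -> R) (w : {set E}) :
  \sum_(w1 : {set E}) \sum_(w2 : {set E}) ((w1 :|: w2) == w)%:R *
     (\sum_(u1 : {set E}) c1 u1 * \prod_(e : E) G1 e (e \in w1) (e \in u1)) *
     (\sum_(u2 : {set E}) c2 u2 * \prod_(e : E) G2 e (e \in w2) (e \in u2)) =
  \sum_(u1 : {set E}) \sum_(u2 : {set E}) c1 u1 * c2 u2 * \prod_(e : E)
     \sum_(b1 : bool) \sum_(b2 : bool)
        ((b1 || b2) == (e \in w))%:R * G1 e b1 (e \in u1) * G2 e b2 (e \in u2).
Proof.
pose F (w1 w2 u1 u2 : {set E}) := c1 u1 * c2 u2 * \prod_(e : E)
  ((((e \in w1) || (e \in w2)) == (e \in w))%:R *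
   G1 e (e \in w1) (e \in u1) * G2 e (e \in w2) (e \in u2)).
transitivity (\sum_(w1 : {set E}) \sum_(w2 : {set E})
              \sum_(u1 : {set E}) \sum_(u2 : {set E}) F w1 w2 u1 u2).
  apply: eq_bigr => w1 _; apply: eq_bigr => w2 _.
  rewrite -mulrA mulr_suml mulr_sumr; apply: eq_bigr => u1 _.
  rewrite !mulr_sumr; apply: eq_bigr => u2 _.
  rewrite /F (eqset_indicator (w1 :|: w2)) !big_split /=.
  rewrite (eq_bigr (fun e => (((e \in w1) || (e \in w2)) == (e \in w))%:R)) => [|e _].
    by ring.
  by rewrite inE.
transitivity (\sum_(w1 : {set E}) \sum_(u1 : {set E})
              \sum_(u2 : {set E}) \sum_(w2 : {set E}) F w1 w2 u1 u2).
  apply: eq_bigr => w1 _; rewrite exchange_big; apply: eq_bigr => u1 _.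
  by rewrite exchange_big.
rewrite exchange_big; apply: eq_bigr => u1 _; rewrite exchange_big; apply: eq_bigr => u2 _.
rewrite -sum_subsets2_prod mulr_sumr; apply: eq_bigr => w1 _.
by rewrite mulr_sumr.
Qed.

End SubsetSums.

Section Boundary.
Variables (V E : finType) (ends : E -> {set V}).

Lemma bdry_symd (X Y : {set E}) :
  bdry ends (symd X Y) = symd (bdry ends X) (bdry ends Y).
Proof.
apply/setP => v; rewrite in_symd !inE /deg -odd_card_symd.
have -> // : [set e in symd X Y | v \in ends e] =
  symd [set e in X | v \in ends e] [set e in Y | v \in ends e].
apply/setP => e.
by rewrite !(in_symd, inE); case: (e \in X); case: (e \in Y); case: (v \in ends e).
Qed.

Definition oddset (n : {ffun E -> nat}) : {set E} := [set e | odd (n e)].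

Lemma cbdry_oddset n : cbdry ends n = bdry ends (oddset n).
Proof.
apply/setP => v; rewrite !inE /deg -(odd_mod _ (erefl : odd 2 = false)) -modn_summ.
rewrite (eq_bigr (fun e => if odd (n e) then 1 else 0)%N) => [|e _]; last first.
  by rewrite modn2; case: odd.
rewrite -big_mkcondr sum1dep_card odd_mod //; congr odd.
by apply: eq_card => e; rewrite !inE andbC.
Qed.

End Boundary.

Section Probabilities.
Variable R : realFieldType.

Lemma psumr_gt0 (I : finType) (F : I -> R) (i0 : I) :
  (forall i, 0 <= F i) -> 0 < F i0 -> 0 < \sum_(i : I) F i.
Proof.
move=> F_ge0 Fi0_gt0; rewrite (bigD1 i0) //= ltr_pwDl //.
by apply: sumr_ge0 => i _.
Qed.

Lemma proportional_probs_eq (I : finType) (p q M : I -> R) (a b : R) :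
  (forall i, p i = a * M i) -> (forall i, q i = b * M i) ->
  \sum_(i : I) p i = 1 -> \sum_(i : I) q i = 1 -> p =1 q.
Proof.
move=> pE qE p1 q1 i.
have aM : a * \sum_(i : I) M i = 1 by rewrite mulr_sumr -p1; apply: eq_bigr => j _; rewrite pE.
have bM : b * \sum_(i : I) M i = 1 by rewrite mulr_sumr -q1; apply: eq_bigr => j _; rewrite qE.
have M_neq0 : \sum_(i : I) M i != 0.
  by apply: contra_eq_neq aM => ->; rewrite mulr0 eq_sym oner_neq0.
by rewrite pE qE (mulIf M_neq0 (etrans aM (esym bM))).
Qed.

End Probabilities.

Lemma normalize_scale (R : fieldType) (I : finType) (a : I -> R) (k : R) (i : I) :
  k != 0 -> k * a i / \sum_(j : I) k * a j = a i / \sum_(j : I) a j.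
Proof. by move=> k_neq0; rewrite -mulr_sumr invfM mulrACA divff ?mul1r. Qed.

Section UnionMeasures.
Variables (R : realType) (E : finType).
Implicit Types (pi : {set E} -> R) (p : E -> R) (w eta : {set E}).

Definition bern_or (p : R) (wb ub : bool) : R :=
  if ub then wb%:R else if wb then p else 1 - p.

Definition loop_bern_wt (y : R) (wb ub : bool) : R :=
  (if ub then y else 1) * bern_or (y ^+ 2) wb ub.

Lemma loop_bern_wt_ge0 (y : R) wb ub : 0 < y < 1 -> 0 <= loop_bern_wt y wb ub.
Proof.
case/andP => y_gt0 y_lt1; have y2_lt1 : y ^+ 2 < 1 by rewrite expr_lt1 ?ltW.
by rewrite /loop_bern_wt /bern_or; case: ub; case: wb => /=; nra.
Qed.

Lemma loop_bern_wt_gt0 (y : R) wb ub : 0 < y < 1 -> ub ==> wb -> 0 < loop_bern_wt y wb ub.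
Proof.
case/andP => y_gt0 y_lt1; have y2_lt1 : y ^+ 2 < 1 by rewrite expr_lt1 ?ltW.
by rewrite /loop_bern_wt /bern_or; case: ub; case: wb => //= _; nra.
Qed.

Lemma bernoulliE p w :
  bernoulli p w = \prod_(e : E) (if e \in w then p e else 1 - p e).
Proof.
rewrite /bernoulli big_mkcond [X in _ * X]big_mkcond -big_split /=; apply: eq_bigr => e _.
by rewrite inE; case: (e \in w); rewrite ?mulr1 ?mul1r.
Qed.

Lemma munion_bernoulliE pi p w :
  munion pi (bernoulli p) w =
  \sum_(u : {set E}) pi u * \prod_(e : E) bern_or (p e) (e \in w) (e \in u).
Proof.
apply: eq_bigr => u _.
transitivity (pi u * \sum_(w2 : {set E}) \prod_(e : E)
    ((((e \in u) || (e \in w2)) == (e \in w))%:R * (if e \in w2 then p e else 1 - p e))).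
  rewrite mulr_sumr; apply: eq_bigr => w2 _.
  rewrite eqset_indicator bernoulliE big_split /=.
  rewrite (eq_bigr (fun e => (((e \in u) || (e \in w2)) == (e \in w))%:R)) => [|e _].
    by ring.
  by rewrite inE.
rewrite (sum_subsets_prod (fun e b =>
  ((((e \in u) || b) == (e \in w))%:R * (if b then p e else 1 - p e)))).
congr (_ * _); apply: eq_bigr => e _.
rewrite /bern_or; case: (e \in u); case: (e \in w);
  by rewrite /= ?mul1r ?mul0r ?add0r ?addr0 ?subrKC.
Qed.

Lemma munion_pdiracE pi eta w :
  munion pi (pdirac R eta) w = \sum_(u : {set E}) pi u * ((u :|: eta) == w)%:R.
Proof.
apply: eq_bigr => u _; rewrite (bigD1 eta) //= big1 ?addr0 => [|w2 /negbTE ne].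
  by rewrite /pdirac eqxx mulr1 mulrC.
by rewrite /pdirac ne mulr0.
Qed.

Lemma sum_munion pi (nu : {set E} -> R) :
  \sum_(w : {set E}) munion pi nu w =
  (\sum_(w : {set E}) pi w) * (\sum_(w : {set E}) nu w).
Proof.
rewrite exchange_big mulr_suml; apply: eq_bigr => w1 _.
rewrite exchange_big mulr_sumr; apply: eq_bigr => w2 _.
rewrite -!mulr_suml (bigD1 (w1 :|: w2)) //= eqxx big1 ?addr0 ?mul1r // => w.
by rewrite eq_sym => /negbTE ->.
Qed.

Lemma sum_bernoulli p : \sum_(w : {set E}) bernoulli p w = 1.
Proof.
under eq_bigr => w _ do rewrite bernoulliE.
rewrite (sum_subsets_prod (fun e b => if b then p e else 1 - p e)).
by rewrite big1 // => e _; rewrite subrKC.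
Qed.

Lemma sum_pdirac eta : \sum_(w : {set E}) pdirac R eta w = 1.
Proof. by rewrite (bigD1 eta) //= big1 ?addr0 /pdirac ?eqxx // => w /negbTE ->. Qed.

Lemma sum_normalize (m : {set E} -> R) :
  \sum_(w : {set E}) m w != 0 -> \sum_(w : {set E}) normalize m w = 1.
Proof. by move=> m_neq0; rewrite -mulr_suml divff. Qed.

End UnionMeasures.

Section EsumTruncation.
Variables (R : realType) (E : finType).
Local Notation T := {ffun E -> nat}.
Local Open Scope classical_set_scope.

Definition nat_ffun N (y : {ffun E -> 'I_N}) : T := [ffun e => nat_of_ord (y e)].

Lemma nat_ffun_inj N : injective (@nat_ffun N).
Proof.
move=> y1 y2 y12; apply/ffunP => e; apply/val_inj.
by have := congr1 (fun g : T => g e) y12; rewrite !ffunE.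
Qed.

Lemma fsbig_nat_ffun (P : pred T) (f : T -> R) N :
  \sum_(x \in @nat_ffun N @` [set y | P (nat_ffun y)]) (f x)%:E =
  (\sum_(y : {ffun E -> 'I_N} | P (nat_ffun y)) f (nat_ffun y))%:E.
Proof.
rewrite fsbig_image; last by move=> y1 y2 _ _; apply: nat_ffun_inj.
rewrite -(@bigfs _ _ _ _ (index_enum _)) ?sumEFin //; first exact: index_enum_uniq.
by move=> y _; rewrite mem_index_enum.
Qed.

Lemma esum_cvg_truncations (P : pred T) (f : T -> R) (l : R) :
  (forall n, 0 <= f n) ->
  (fun N : nat => \sum_(y : {ffun E -> 'I_N} | P (nat_ffun y)) f (nat_ffun y) : R) @ \oo --> l ->
  esum [set n | P n] (fun n => (f n)%:E) = l%:E.
Proof.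
move=> f_ge0 cvg_trunc; set a := fun N => _ in cvg_trunc.
have limE : lim (a @ \oo) = l by apply: cvg_lim.
have a_cvg : cvg (a @ \oo) by apply/cvg_ex; exists l.
have aE N : (a N)%:E = \sum_(x \in @nat_ffun N @` [set y | P (nat_ffun y)]) (f x)%:E.
  by rewrite fsbig_nat_ffun.
have esum_le : (esum [set n | P n] (fun n => (f n)%:E) <= l%:E)%E.
  apply: ge_ereal_sup => _ [X [finX XP] <-]; rewrite fsumEFin // lee_fin -limE.
  apply: limr_ge => //.
  pose N0 := (\max_(x <- finmap.enum_fset (fset_set X)) \max_(e : E) x e).+1.
  exists N0 => // M /= N0M; rewrite -lee_fin -fsumEFin // aE.
  apply: lee_fsum_nneg_subset => //; [exact: finite_image finite_finset| |].
    move=> x; rewrite !in_setE => Xx.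
    have x_lt e : (x e < M)%N.
      apply: leq_trans N0M; rewrite ltnS.
      apply: (@leq_trans (\max_(e : E) x e)); first exact: (leq_bigmax e).
      apply: (@leq_bigmax_seq _ _ xpredT (fun x : T => \max_(e : E) x e) x) => //.
      by rewrite in_fset_set // in_setE.
    have xE : nat_ffun [ffun e => Ordinal (x_lt e)] = x.
      by apply/ffunP => e; rewrite !ffunE.
    by exists [ffun e => Ordinal (x_lt e)]; rewrite /= xE //; exact: XP.
  by move=> x _; rewrite lee_fin f_ge0.
have esum_fin : esum [set n | P n] (fun n => (f n)%:E) \is a fin_num.
  rewrite ge0_fin_numE ?(le_lt_trans esum_le) ?ltry //.
  by apply: esum_ge0 => n _; rewrite lee_fin.
apply/le_anti; rewrite esum_le /= -(fineK esum_fin) lee_fin -limE.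
apply: limr_le => //; exists 0%N => // M _ /=.
rewrite -lee_fin (fineK esum_fin) aE; apply: esum_ge.
exists (@nat_ffun M @` [set y | P (nat_ffun y)]) => //.
by split; [exact: finite_image finite_finset | move=> x [y Py <-]].
Qed.

Lemma esum_prod_expansion (P : pred T) (Phi : {set E} -> E -> nat -> bool)
    (c : {set E} -> R) (wt : E -> nat -> R) (L : {set E} -> E -> R) :
  (forall n, (P n)%:R = \sum_(u : {set E}) c u * \prod_(e : E) (Phi u e (n e))%:R) ->
  (forall e k, 0 <= wt e k) ->
  (forall u e, (fun N : nat => \sum_(k < N) (Phi u e k)%:R * wt e k : R) @ \oo --> L u e) ->
  esum [set n | P n] (fun n => (\prod_(e : E) wt e (n e))%:E) =
  (\sum_(u : {set E}) c u * \prod_(e : E) L u e)%:E.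
Proof.
move=> PE wt_ge0 cvgL.
apply: esum_cvg_truncations => [n|]; first by apply: prodr_ge0 => e _.
have -> : (fun N =>
      \sum_(y : {ffun E -> 'I_N} | P (nat_ffun y)) \prod_(e : E) wt e (nat_ffun y e)) =
    (fun N => \sum_(u : {set E}) c u * \prod_(e : E) \sum_(k < N) (Phi u e k)%:R * wt e k).
  apply: funext => N; rewrite big_mkcond /=.
  transitivity (\sum_(y : {ffun E -> 'I_N}) \sum_(u : {set E})
      c u * \prod_(e : E) ((Phi u e (y e))%:R * wt e (y e))).
    apply: eq_bigr => y _; rewrite -mulrb -mulr_natl PE mulr_suml.
    apply: eq_bigr => u _; rewrite -mulrA -big_split /=; congr (_ * _).
    by apply: eq_bigr => e _; rewrite ffunE.
  by rewrite exchange_big; apply: eq_bigr => u _; rewrite -mulr_sumr bigA_distr_bigA.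
apply: cvg_big => [|u _]; first exact: add_continuous.
apply: cvgMl_tmp; apply: cvg_big => [|e _]; first exact: mul_continuous.
exact: cvgL.
Qed.

End EsumTruncation.

Section PoissonSeries.
Variable R : realType.
Implicit Type J : R.
Local Open Scope classical_set_scope.

Definition cosh J : R := (expR J + expR (- J)) / 2.
Definition sinh J : R := (expR J - expR (- J)) / 2.
Definition poisson J (k : nat) : R := expR (- J) * J ^+ k / k`!%:R.

Lemma cvg_exp_series J :
  (fun N : nat => \sum_(k < N) J ^+ k / k`!%:R : R) @ \oo --> expR J.
Proof.
have -> : (fun N : nat => \sum_(k < N) J ^+ k / k`!%:R) = series (exp_coeff J).
  by apply: funext => N; rewrite /series /= big_mkord.
exact: is_cvg_series_exp_coeff.
Qed.

Lemma cvg_parity_exp_series J (b : bool) :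
  (fun N : nat => \sum_(k < N) (odd k == b)%:R * (J ^+ k / k`!%:R) : R) @ \oo -->
  (if b then sinh J else cosh J).
Proof.
have termE k : (odd k == b)%:R * (J ^+ k / k`!%:R) =
    (J ^+ k / k`!%:R + (if b then -1 else 1) * ((- J) ^+ k / k`!%:R)) / 2.
  by rewrite exprNn -signr_odd; case: (odd k); case: b; rewrite /= ?expr0 ?expr1; field.
have sumE : (fun N : nat => \sum_(k < N) (odd k == b)%:R * (J ^+ k / k`!%:R)) =
    (fun N : nat => (\sum_(k < N) J ^+ k / k`!%:R +
       (if b then -1 else 1) * \sum_(k < N) (- J) ^+ k / k`!%:R) / 2).
  apply: funext => N; rewrite [in RHS]mulr_sumr -big_split mulr_suml.
  by apply: eq_bigr => k _; exact: termE.
have -> : (if b then sinh J else cosh J) = (expR J + (if b then -1 else 1) * expR (- J)) / 2.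
  by rewrite /sinh /cosh; case: (b); rewrite ?mulN1r ?mul1r.
rewrite sumE; apply: cvgMr_tmp; apply: cvgD; first exact: cvg_exp_series.
by apply: cvgMl_tmp; exact: cvg_exp_series.
Qed.

Lemma cvg_poisson_parity J (g : bool -> bool -> bool) :
  (fun N : nat => \sum_(k < N) (g (k == 0 :> nat) (odd k))%:R * poisson J k : R) @ \oo -->
  expR (- J) * ((g false true)%:R * sinh J + (g false false)%:R * cosh J +
                ((g true false)%:R - (g false false)%:R)).
Proof.
have gE k : (g (k == 0 :> nat) (odd k))%:R =
    (g false true)%:R * (odd k == true)%:R + (g false false)%:R * (odd k == false)%:R +
    ((g true false)%:R - (g false false)%:R) * (k == 0 :> nat)%:R :> R.
  by case: k => [|k] /=; [|case: (odd k)] => /=; ring.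
have cvg_at0 :
    (fun N : nat => \sum_(k < N) (k == 0 :> nat)%:R * (J ^+ k / k`!%:R) : R) @ \oo --> (1 : R).
  apply: cvg_near_cst; exists 1%N => // -[|N] //= _.
  by rewrite big_ord_recl big1 => [|k _]; rewrite /= ?mul0r // mul1r expr0 divr1 addr0.
have sumE : (fun N : nat => \sum_(k < N) (g (k == 0 :> nat) (odd k))%:R * poisson J k) =
  (fun N : nat => expR (- J) *
    ((g false true)%:R * \sum_(k < N) (odd k == true)%:R * (J ^+ k / k`!%:R) +
     (g false false)%:R * \sum_(k < N) (odd k == false)%:R * (J ^+ k / k`!%:R) +
     ((g true false)%:R - (g false false)%:R) *
       \sum_(k < N) (k == 0 :> nat)%:R * (J ^+ k / k`!%:R))).
  apply: funext => N; rewrite !mulr_sumr -!big_split mulr_sumr.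
  by apply: eq_bigr => k _; rewrite /= gE /poisson; ring.
have cvg_odd := @cvg_parity_exp_series J true.
have cvg_even := @cvg_parity_exp_series J false.
rewrite sumE; apply: cvgMl_tmp.
have := cvgD (cvgD (cvgMl_tmp (a := (g false true)%:R) cvg_odd)
                   (cvgMl_tmp (a := (g false false)%:R) cvg_even))
             (cvgMl_tmp (a := (g true false)%:R - (g false false)%:R) cvg_at0).
by rewrite mulr1; apply.
Qed.

Definition pmass_nz_odd J (wb ub : bool) : R :=
  expR (- J) * (if wb then (if ub then sinh J else cosh J - 1) else (~~ ub)%:R).
Definition pmass_odd J (ub : bool) : R := expR (- J) * (if ub then sinh J else cosh J).

Lemma cvg_pmass_nz_odd J wb ub :
  (fun N : nat => \sum_(k < N) (((k != 0 :> nat) == wb) && (odd k == ub))%:R * poisson J k : R)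
  @ \oo --> pmass_nz_odd J wb ub.
Proof.
have -> : pmass_nz_odd J wb ub = expR (- J) *
    (((true == wb) && (true == ub))%:R * sinh J + ((true == wb) && (false == ub))%:R * cosh J +
     (((false == wb) && (false == ub))%:R - ((true == wb) && (false == ub))%:R)).
  by rewrite /pmass_nz_odd; case: wb; case: ub => /=; ring.
exact: (@cvg_poisson_parity J (fun z o => (~~ z == wb) && (o == ub))).
Qed.

Lemma cvg_pmass_odd J ub :
  (fun N : nat => \sum_(k < N) (odd k == ub)%:R * poisson J k : R) @ \oo --> pmass_odd J ub.
Proof.
have -> : pmass_odd J ub = expR (- J) *
    ((true == ub)%:R * sinh J + (false == ub)%:R * cosh J + ((false == ub)%:R - (false == ub)%:R)).
  by rewrite /pmass_odd; case: ub => /=; ring.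
exact: (@cvg_poisson_parity J (fun _ o => o == ub)).
Qed.

Lemma pmass_nz_odd_sum J ub : pmass_nz_odd J true ub + pmass_nz_odd J false ub = pmass_odd J ub.
Proof. by rewrite /pmass_nz_odd /pmass_odd; case: ub => /=; ring. Qed.

Lemma cosh_gt0 J : 0 < cosh J.
Proof. by rewrite /cosh divr_gt0 ?addr_gt0 ?expR_gt0. Qed.

Lemma sinh_gt0 J : 0 < J -> 0 < sinh J.
Proof. by move=> J_gt0; rewrite /sinh divr_gt0 // subr_gt0 ltr_expR; lra. Qed.

Lemma pmass_odd_gt0 J ub : 0 < J -> 0 < pmass_odd J ub.
Proof.
move=> J_gt0; rewrite /pmass_odd mulr_gt0 ?expR_gt0 //.
by case: ub; [exact: sinh_gt0 | exact: cosh_gt0].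
Qed.

End PoissonSeries.


Section Tanh.
Variable R : realType.
Implicit Type J : R.

Lemma tanhE J : tanh J = sinh J / cosh J.
Proof.
have den_neq0 : expR J + expR (- J) != 0 by rewrite gt_eqF ?addr_gt0 ?expR_gt0.
by rewrite /tanh /sinh /cosh; field.
Qed.

Lemma tanh_gt0 J : 0 < J -> 0 < tanh J.
Proof. by move=> J_gt0; rewrite tanhE divr_gt0 ?sinh_gt0 ?cosh_gt0. Qed.

Lemma tanh_lt1 J : tanh J < 1.
Proof.
rewrite tanhE ltr_pdivrMr ?cosh_gt0 // mul1r /sinh /cosh.
by have := expR_gt0 (- J); lra.
Qed.

Lemma pmass_nz_odd_union J (wb a1 a2 : bool) :
  \sum_(b1 : bool) \sum_(b2 : bool)
    ((b1 || b2) == wb)%:R * pmass_nz_odd J b1 a1 * pmass_nz_odd J b2 a2 =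
  (expR (- J) * cosh J) ^+ 2 * ((a1 ==> wb)%:R * loop_bern_wt (tanh J) wb (a2 (+) a1)).
Proof.
rewrite !big_bool tanhE /pmass_nz_odd /loop_bern_wt /bern_or /sinh /cosh !expRN.
have y_gt0 := expR_gt0 J; set y := expR J in y_gt0 *.
have y_neq0 : y != 0 by rewrite gt_eqF.
have yy1_neq0 : y * y + 1 != 0 by rewrite gt_eqF ?addr_gt0 ?mulr_gt0.
by case: wb; case: a1; case: a2 => /=; field; rewrite y_neq0 yy1_neq0.
Qed.

End Tanh.

Section Currents.
Variables (R : realType) (V E : finType) (ends : E -> {set V}) (J : E -> R).
Hypothesis J_gt0 : forall e, 0 < J e.
Implicit Types (C : {set V}) (w : {set E}) (n : {ffun E -> nat}).
Local Open Scope classical_set_scope.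

Lemma cbdry_indicator n C :
  ((cbdry ends n == C)%:R : R) =
  \sum_(u : {set E}) (bdry ends u == C)%:R * \prod_(e : E) (odd (n e) == (e \in u))%:R.
Proof.
have oddsetE (u : {set E}) : \prod_(e : E) (odd (n e) == (e \in u))%:R = (oddset n == u)%:R :> R.
  by rewrite eqset_indicator; apply: eq_bigr => e _; rewrite inE.
rewrite (bigD1 (oddset n)) //= oddsetE eqxx mulr1 cbdry_oddset big1 ?addr0 // => u.
by rewrite oddsetE eq_sym => /negbTE ->; rewrite mulr0.
Qed.

Lemma current_indicator n w C :
  (((csupp n == w) && (cbdry ends n == C))%:R : R) =
  \sum_(u : {set E}) (bdry ends u == C)%:R *
    \prod_(e : E) (((n e != 0)%N == (e \in w)) && (odd (n e) == (e \in u)))%:R.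
Proof.
rewrite -mulnb natrM cbdry_indicator mulr_sumr; apply: eq_bigr => u _.
rewrite mulrCA (eqset_indicator _ (csupp n)) -big_split; congr (_ * _).
by apply: eq_bigr => e _; rewrite inE -mulnb natrM.
Qed.

Definition current_wt C w : R :=
  \sum_(u : {set E}) (bdry ends u == C)%:R * \prod_(e : E) pmass_nz_odd (J e) (e \in w) (e \in u).
Definition current_Z C : R :=
  \sum_(u : {set E}) (bdry ends u == C)%:R * \prod_(e : E) pmass_odd (J e) (e \in u).

Lemma poisson_ge0 e k : 0 <= poisson (J e) k.
Proof. by rewrite /poisson divr_ge0 ?mulr_ge0 ?exprn_ge0 ?expR_ge0 ?ltW. Qed.

Lemma currentE C w : current ends J C w = current_wt C w / current_Z C.
Proof.
have numE : [set n | csupp n = w /\ cbdry ends n = C] =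
    [set n | (csupp n == w) && (cbdry ends n == C)].
  by apply/seteqP; split => n /=; [case=> -> ->; rewrite !eqxx | case/andP => /eqP-> /eqP->].
have denE : [set n | cbdry ends n = C] = [set n | cbdry ends n == C].
  by apply/seteqP; split => n /= /eqP.
rewrite /current numE denE.
rewrite (@esum_prod_expansion _ _ _
  (fun u e k => ((k != 0)%N == (e \in w)) && (odd k == (e \in u))) (fun u => (bdry ends u == C)%:R)
  (fun e k => poisson (J e) k) (fun u e => pmass_nz_odd (J e) (e \in w) (e \in u))) => [|n|e k|u e].
- rewrite (@esum_prod_expansion _ _ _ (fun u e k => odd k == (e \in u))
    (fun u => (bdry ends u == C)%:R)
    (fun e k => poisson (J e) k) (fun u e => pmass_odd (J e) (e \in u))) => [//|n|e k|u e].
  + exact: cbdry_indicator.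
  + exact: poisson_ge0.
  + exact: cvg_pmass_odd.
- exact: current_indicator.
- exact: poisson_ge0.
- exact: cvg_pmass_nz_odd.
Qed.

Lemma sum_current_wt C : \sum_(w : {set E}) current_wt C w = current_Z C.
Proof.
rewrite exchange_big; apply: eq_bigr => u _; rewrite -mulr_sumr.
rewrite (sum_subsets_prod (fun e b => pmass_nz_odd (J e) b (e \in u))).
by congr (_ * _); apply: eq_bigr => e _; exact: pmass_nz_odd_sum.
Qed.

Lemma current_Z_gt0 C : (exists F, bdry ends F = C) -> 0 < current_Z C.
Proof.
case=> F FC; apply: (psumr_gt0 (i0 := F)) => [u|].
  by rewrite mulr_ge0 ?prodr_ge0 // => e _; rewrite ltW ?pmass_odd_gt0.
by rewrite FC eqxx mul1r prodr_gt0 // => e _; rewrite pmass_odd_gt0.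
Qed.

Lemma sum_current C :
  (exists F, bdry ends F = C) -> \sum_(w : {set E}) current ends J C w = 1.
Proof.
move=> solC; under eq_bigr do rewrite currentE.
by rewrite -mulr_suml sum_current_wt divff // gt_eqF // current_Z_gt0.
Qed.

End Currents.

Section LoopUnions.
Variables (R : realType) (V E : finType) (ends : E -> {set V}) (x : E -> R).
Hypothesis x_gt0 : forall e, 0 < x e.
Hypothesis x_lt1 : forall e, x e < 1.
Variables (A B : {set V}).
Implicit Types (C : {set V}) (w eta u : {set E}).

Local Notation bd := (bdry ends).
Local Notation Bern := (bernoulli (fun e => x e ^+ 2)).

Definition loop_wt C w : R := (bd w == C)%:R * \prod_(e in w) x e.
Definition loop_Z C : R := \sum_(w : {set E}) loop_wt C w.
Definition union_wt C w : R :=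
  \sum_(u : {set E}) (bd u == C)%:R * \prod_(e : E) loop_bern_wt (x e) (e \in w) (e \in u).

Lemma loopOE C w : loopO ends x C w = loop_wt C w / loop_Z C.
Proof. by []. Qed.

Lemma munion_loopO_bernoulli C w : munion (loopO ends x C) Bern w = union_wt C w / loop_Z C.
Proof.
rewrite munion_bernoulliE /union_wt mulr_suml; apply: eq_bigr => u _.
by rewrite /loop_bern_wt big_split /= -big_mkcond mulrAC mulrA.
Qed.

Let x_bounds e : 0 < x e < 1. Proof. by rewrite x_gt0 x_lt1. Qed.

Lemma union_wt_ge0 C w : 0 <= union_wt C w.
Proof.
by apply: sumr_ge0 => u _; rewrite mulr_ge0 ?prodr_ge0 // => e _; exact: loop_bern_wt_ge0.
Qed.

Lemma union_wt_gt0 w (F1 F2 : {set E}) :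
  F1 \subset w -> F2 \subset w -> 0 < union_wt (symd (bd F1) (bd F2)) w.
Proof.
move=> /fintype.subsetP F1w /fintype.subsetP F2w.
apply: (psumr_gt0 (i0 := symd F1 F2)) => [u|].
  by rewrite mulr_ge0 ?prodr_ge0 // => e _; exact: loop_bern_wt_ge0.
rewrite bdry_symd eqxx mul1r prodr_gt0 // => e _; apply: loop_bern_wt_gt0 => //.
by rewrite in_symd; apply/implyP; case: (boolP (e \in F1)) => [/F1w|_ /F2w].
Qed.

Lemma loop_Z_gt0 C : (exists F, bd F = C) -> 0 < loop_Z C.
Proof.
case=> F FC; apply: (psumr_gt0 (i0 := F)) => [w|].
  by rewrite mulr_ge0 ?prodr_ge0 // => e _; rewrite ltW.
by rewrite /loop_wt FC eqxx mul1r prodr_gt0.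
Qed.

Lemma sum_loopO C : (exists F, bd F = C) -> \sum_(w : {set E}) loopO ends x C w = 1.
Proof. by move=> solC; rewrite sum_normalize // gt_eqF // loop_Z_gt0. Qed.

Local Notation D := (symd A B).

Lemma sum_bdry_shift eta (F : {set E} -> R) : bd eta = A ->
  \sum_(u : {set E}) (bd u == D)%:R * F u =
  \sum_(u : {set E}) (bd u == B)%:R * F (symd u eta).
Proof.
move=> etaA; rewrite (reindex_inj (@symd_inj _ eta)); apply: eq_bigr => u _.
by rewrite bdry_symd etaA [symd A B]symdC (inj_eq (@symd_inj _ A)).
Qed.

Definition shifted_wt eta w : R :=
  \sum_(u : {set E}) (bd u == B)%:R * \prod_(e : E)
    (((e \in eta) ==> (e \in w))%:R * loop_bern_wt (x e) (e \in w) ((e \in u) (+) (e \in eta))).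

Lemma subset_union_wt eta w :
  bd eta = A -> (eta \subset w)%:R * union_wt D w = shifted_wt eta w.
Proof.
move=> etaA; rewrite /union_wt (sum_bdry_shift _ etaA) mulr_sumr; apply: eq_bigr => u _.
rewrite mulrCA subset_indicator -big_split; congr (_ * _).
by apply: eq_bigr => e _; rewrite in_symd.
Qed.

Lemma sum_subset_union_wt eta :
  bd eta = A -> \sum_(w : {set E}) (eta \subset w)%:R * union_wt D w =
                (\prod_(e in eta) x e) * loop_Z B.
Proof.
move=> etaA; rewrite (eq_bigr (shifted_wt eta)) => [|w _]; last exact: subset_union_wt.
rewrite exchange_big mulr_sumr; apply: eq_bigr => u _.
rewrite -mulr_sumr mulrCA; congr (_ * _).
rewrite (sum_subsets_prod (fun e b =>
  ((e \in eta) ==> b)%:R * loop_bern_wt (x e) b ((e \in u) (+) (e \in eta)))).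
rewrite [\prod_(e in eta) _]big_mkcond [\prod_(e in u) _]big_mkcond -big_split.
apply: eq_bigr => e _ /=.
by rewrite /loop_bern_wt /bern_or; case: (e \in eta); case: (e \in u) => /=; ring.
Qed.

Definition dcurrent_wt w : R := \sum_(u : {set E}) (bd u == A)%:R * shifted_wt u w.

Lemma card_fsub_union_wt w : #|fsub ends A w|%:R * union_wt D w = dcurrent_wt w.
Proof.
rewrite -sum_indicator mulr_suml; apply: eq_bigr => u _.
rewrite inE; have [uA|_] := eqVneq (bd u) A; last by rewrite andbF !mul0r.
by rewrite -subset_union_wt // mul1r andbT; case: (u \subset w); rewrite ?mul1r ?mul0r.
Qed.

Lemma munion_loopO_bernoulli_pdirac eta w :
  munion (munion (loopO ends x B) Bern) (pdirac R eta) w =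
  (\prod_(e in eta) (x e)^-1) / loop_Z B * shifted_wt eta w.
Proof.
rewrite munion_pdiracE (eq_bigr (fun u => union_wt B u * ((u :|: eta) == w)%:R / loop_Z B)).
  2: by move=> u _; rewrite munion_loopO_bernoulli mulrAC.
rewrite -mulr_suml [RHS]mulrAC; congr (_ / _).
transitivity (\sum_(u : {set E}) (bd u == B)%:R * \sum_(w' : {set E}) \prod_(e : E)
    (loop_bern_wt (x e) (e \in w') (e \in u) * (((e \in w') || (e \in eta)) == (e \in w))%:R)).
  rewrite /union_wt; under eq_bigr do rewrite mulr_suml.
  rewrite exchange_big; apply: eq_bigr => u _; rewrite mulr_sumr; apply: eq_bigr => w' _.
  rewrite (eqset_indicator _ (w' :|: eta)) -mulrA -big_split; congr (_ * _).
  by apply: eq_bigr => e _; rewrite inE.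
rewrite /shifted_wt mulr_sumr; apply: eq_bigr => u _; rewrite mulrCA; congr (_ * _).
rewrite (sum_subsets_prod (fun e b =>
  loop_bern_wt (x e) b (e \in u) * ((b || (e \in eta)) == (e \in w))%:R)).
rewrite [\prod_(e in eta) _]big_mkcond -big_split; apply: eq_bigr => e _ /=.
have x_neq0 : x e != 0 by rewrite gt_eqF.
by rewrite /loop_bern_wt /bern_or; case: (e \in eta); case: (e \in u); case: (e \in w) => /=; field.
Qed.

End LoopUnions.

Section Coupling.
Variables (R : realType) (V E : finType) (ends : E -> {set V}) (J : E -> R).
Hypothesis J_gt0 : forall e, 0 < J e.
Variables (A B : {set V}).
Hypotheses (solA : exists F, bdry ends F = A) (solB : exists F, bdry ends F = B).
Implicit Types (w eta : {set E}).

Local Notation t := (fun e => tanh (J e)).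
Local Notation P := (coupling ends t A B).
Local Notation D := (symd A B).
Local Notation bd := (bdry ends).

Let t_gt0 e : 0 < t e. Proof. exact: tanh_gt0. Qed.
Let t_lt1 e : t e < 1. Proof. exact: tanh_lt1. Qed.

Lemma dcurrentE w :
  dcurrent ends J A B w = \prod_(e : E) (expR (- J e) * cosh (J e)) ^+ 2 /
    (current_Z ends J A * current_Z ends J B) * dcurrent_wt ends t A B w.
Proof.
transitivity ((current_Z ends J A * current_Z ends J B)^-1 * \sum_(w1 : {set E}) \sum_(w2 : {set E})
    ((w1 :|: w2) == w)%:R * current_wt ends J A w1 * current_wt ends J B w2).
  rewrite mulr_sumr; apply: eq_bigr => w1 _; rewrite mulr_sumr; apply: eq_bigr => w2 _.
  by rewrite !currentE // invfM; ring.
rewrite mulrAC mulrC; congr (_ * _).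
rewrite /current_wt (@sum_union_expand _ _
  (fun e => pmass_nz_odd (J e)) (fun e => pmass_nz_odd (J e))
  (fun u => (bd u == A)%:R) (fun u => (bd u == B)%:R)).
rewrite /dcurrent_wt mulr_sumr; apply: eq_bigr => u1 _.
rewrite /shifted_wt mulrCA !mulr_sumr; apply: eq_bigr => u2 _.
rewrite (eq_bigr _ (fun e _ => pmass_nz_odd_union _ _ _ _)) big_split /=.
by ring.
Qed.

Let sol_symd : exists F, bd F = D.
Proof. by case: solA => F1 <-; case: solB => F2 <-; exists (symd F1 F2); rewrite bdry_symd. Qed.

Let FA_setT C : (exists F, bd F = C) -> FA ends C [set: E].
Proof. by case=> F FC; apply/existsP; exists F; rewrite finset.subsetT FC eqxx. Qed.

Let FA_fsub w eta : eta \in fsub ends A w -> FA ends A w.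
Proof. by rewrite inE => eta_sub; apply/existsP; exists eta. Qed.

Lemma union_wt_symd_gt0 w : FA ends A w -> FA ends B w -> 0 < union_wt ends t D w.
Proof.
case/existsP => F1 /andP[F1w /eqP <-]; case/existsP => F2 /andP[F2w /eqP <-].
exact: union_wt_gt0.
Qed.

Definition coupling_wt (p : {set E} * {set E}) : R :=
  union_wt ends t D p.1 * (p.2 \in fsub ends A p.1)%:R.
Definition coupling_Z : R := \sum_(q : {set E} * {set E}) coupling_wt q.

Lemma rhoE w : rho ends t A B w = (FA ends A w)%:R * union_wt ends t D w /
  \sum_(w' : {set E}) (FA ends A w')%:R * union_wt ends t D w'.
Proof.
have numE w' : (FA ends A w')%:R * munion (loopO ends t D) (bernoulli (fun e => t e ^+ 2)) w' =
    (loop_Z ends t D)^-1 * ((FA ends A w')%:R * union_wt ends t D w').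
  by rewrite munion_loopO_bernoulli mulrA mulrC.
rewrite /rho /normalize numE (eq_bigr _ (fun w' _ => numE w')) normalize_scale //.
by rewrite invr_eq0 gt_eqF ?loop_Z_gt0.
Qed.

Lemma coupling_Z_gt0 : 0 < coupling_Z.
Proof.
case: solA => F FA'; apply: (psumr_gt0 (i0 := ([set: E], F))) => [[w eta]|].
  by rewrite mulr_ge0 ?ler0n ?union_wt_ge0.
have F_sub : F \in fsub ends A [set: E] by rewrite inE finset.subsetT FA' eqxx.
by rewrite /coupling_wt /= F_sub mulr1 union_wt_symd_gt0 ?FA_setT.
Qed.

Lemma couplingE w eta :
  P (w, eta) = coupling_Z^-1 * (union_wt ends t D w * (eta \in fsub ends A w)%:R).
Proof.
pose Zr := \sum_(w' : {set E}) (FA ends A w')%:R * union_wt ends t D w'.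
have Zr_gt0 : 0 < Zr.
  apply: (psumr_gt0 (i0 := [set: E])) => [w'|]; first by rewrite mulr_ge0 ?union_wt_ge0.
  by rewrite FA_setT // mul1r union_wt_symd_gt0 ?FA_setT.
have Sigma_gt0 : (0 < #|Sigma ends A|)%N.
  by case: solA => F FA'; apply/card_gt0P; exists F; rewrite inE FA'.
have numE (q : {set E} * {set E}) :
    rho ends t A B q.1 * gamma R ends A q.2 * (q.2 \in fsub ends A q.1)%:R =
    (Zr * #|Sigma ends A|%:R)^-1 * coupling_wt q.
  case: q => w' eta' /=; rewrite rhoE -/Zr /gamma /coupling_wt /=.
  have [eta_sub|] := boolP (eta' \in fsub ends A w'); last by rewrite !mulr0.
  have eta_Sigma : eta' \in Sigma ends A by move: eta_sub; rewrite !inE => /andP[].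
  by rewrite (FA_fsub eta_sub) eta_Sigma invfM /=; ring.
rewrite /coupling numE (eq_bigr _ (fun q _ => numE q)) normalize_scale; last first.
  by rewrite invr_eq0 mulf_neq0 ?gt_eqF ?ltr0n.
by rewrite mulrC.
Qed.

Lemma sum_coupling : \sum_(q : {set E} * {set E}) P q = 1.
Proof.
rewrite (eq_bigr (fun q => coupling_Z^-1 * coupling_wt q)) => [|[w eta] _]; last exact: couplingE.
by rewrite -mulr_sumr mulVf // gt_eqF // coupling_Z_gt0.
Qed.

Lemma sum_margS : \sum_(eta : {set E}) margS P eta = 1.
Proof. by rewrite exchange_big pair_big /= -sum_coupling; apply: eq_bigr => -[]. Qed.

Lemma sum_margO : \sum_(w : {set E}) margO P w = 1.
Proof. by rewrite pair_big /= -sum_coupling; apply: eq_bigr => -[]. Qed.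

Lemma margS_loopO eta : margS P eta = loopO ends t A eta.
Proof.
apply: (@proportional_probs_eq _ _ _ _ (loop_wt ends t A)
  (coupling_Z^-1 * loop_Z ends t B) (loop_Z ends t A)^-1) => [eta'|eta'||].
- rewrite /margS (eq_bigr _ (fun w _ => couplingE w eta')) -mulr_sumr -mulrA; congr (_ * _).
  rewrite /loop_wt; have [eta'A|ne] := eqVneq (bd eta') A; last first.
    by rewrite mulr0n mul0r mulr0 big1 // => w _; rewrite inE (negbTE ne) andbF mulr0.
  rewrite mulr1n mul1r mulrC -(sum_subset_union_wt _ _ eta'A); apply: eq_bigr => w _.
  by rewrite inE eta'A eqxx andbT mulrC.
- by rewrite loopOE mulrC.
- exact: sum_margS.
- exact: sum_loopO.
Qed.

Lemma margOE w : margO P w = coupling_Z^-1 * (#|fsub ends A w|%:R * union_wt ends t D w).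
Proof.
rewrite /margO (eq_bigr _ (fun eta _ => couplingE w eta)) -mulr_sumr -mulr_sumr.
by rewrite sum_indicator [_ * #|_|%:R]mulrC.
Qed.

Lemma condO_unif w : FA ends A w -> FA ends B w ->
  forall eta, condO P w eta = unif R (fsub ends A w) eta.
Proof.
move=> FAw FBw eta; rewrite /condO /margO /unif -sum_indicator.
rewrite couplingE (eq_bigr _ (fun eta' _ => couplingE w eta')).
under eq_bigr do rewrite mulrA.
by rewrite mulrA normalize_scale // mulf_neq0 ?invr_eq0 ?gt_eqF ?coupling_Z_gt0 ?union_wt_symd_gt0.
Qed.

Lemma sum_dcurrent : \sum_(w : {set E}) dcurrent ends J A B w = 1.
Proof. by rewrite sum_munion !sum_current ?mulr1. Qed.

Lemma margO_dcurrent w : margO P w = dcurrent ends J A B w.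
Proof.
apply: (@proportional_probs_eq _ _ _ _ (dcurrent_wt ends t A B) coupling_Z^-1
  (\prod_(e : E) (expR (- J e) * cosh (J e)) ^+ 2 / (current_Z ends J A * current_Z ends J B)))
  => [w'|w'||].
- by rewrite margOE card_fsub_union_wt.
- exact: dcurrentE.
- exact: sum_margO.
- exact: sum_dcurrent.
Qed.

Lemma loopO_gt0 eta : bd eta = A -> 0 < loopO ends t A eta.
Proof.
by move=> etaA; rewrite loopOE /loop_wt etaA eqxx mul1r divr_gt0 ?prodr_gt0 ?loop_Z_gt0.
Qed.

Lemma condS_munion eta : eta \in Sigma ends A -> forall w,
  condS P eta w =
  munion (munion (loopO ends t B) (bernoulli (fun e => t e ^+ 2))) (pdirac R eta) w.
Proof.
rewrite inE => /eqP etaA w.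
apply: (@proportional_probs_eq _ _ _ _ (shifted_wt ends t B eta) (coupling_Z^-1 / margS P eta)
  ((\prod_(e in eta) (t e)^-1) / loop_Z ends t B)) => [w'|w'||].
- rewrite /condS couplingE inE etaA eqxx andbT [_ * (_ \subset _)%:R]mulrC.
  by rewrite (@subset_union_wt _ _ _ ends t A B eta w' etaA) mulrAC.
- exact: munion_loopO_bernoulli_pdirac.
- rewrite -mulr_suml divff // -[\sum_(w : {set E}) _]/(margS P eta).
  by rewrite margS_loopO gt_eqF ?loopO_gt0.
- by rewrite !sum_munion sum_loopO // sum_bernoulli sum_pdirac !mulr1.
Qed.

Lemma sum_dcurrent_unif eta :
  \sum_(w : {set E}) dcurrent ends J A B w * unif R (fsub ends A w) eta = loopO ends t A eta.
Proof.
rewrite -margS_loopO; apply: eq_bigr => w _; rewrite -margO_dcurrent margOE couplingE /unif.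
have [eta_sub|] := boolP (eta \in fsub ends A w); last by rewrite mulr0n mul0r !mulr0.
have card_neq0 : #|fsub ends A w|%:R != 0 :> R.
  by rewrite pnatr_eq0 -lt0n; apply/card_gt0P; exists eta.
by rewrite mulr1n; field; rewrite card_neq0 gt_eqF ?coupling_Z_gt0.
Qed.

End Coupling.

Unset Implicit Arguments.

Theorem proposition2p2 (R : realType) (V E : finType) (ends : E -> {set V})
  (ends2 : forall e, #|ends e| = 2%N) (ends_inj : injective ends)
  (J : E -> R) (Jpos : forall e, 0 < J e)
  (A B : {set V}) (Aeven : ~~ odd #|A|) (Beven : ~~ odd #|B|)
  (Asol : exists F : {set E}, bdry ends F = A)
  (Bsol : exists F : {set E}, bdry ends F = B) :
  let t := fun e => tanh (J e) in
  let P := coupling ends t A B in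
  (* (a) *)
  ((forall eta, margS P eta = loopO ends t A eta) /\
   (forall w, FA ends A w -> FA ends B w ->
      forall eta, condO P w eta = unif R (fsub ends A w) eta)) /\
  (* (b) *)
  ((forall w, margO P w = dcurrent ends J A B w) /\
   (forall eta, eta \in Sigma ends A -> forall w,
      condS P eta w =
      munion (munion (loopO ends t B) (bernoulli (fun e => t e ^+ 2))) (pdirac R eta) w)) /\
  (* in particular *)
  (forall eta,
     \sum_(w : {set E}) dcurrent ends J A B w * unif R (fsub ends A w) eta
     = loopO ends t A eta).
Proof.
move=> t P; rewrite /P /t.
split; [split | split; [split |]].
- by move=> eta; apply: margS_loopO.
- by move=> w FAw FBw eta; apply: condO_unif.
- by move=> w; apply: margO_dcurrent.
- by move=> eta etaS w; apply: condS_munion.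
- by move=> eta; apply: sum_dcurrent_unif.
Qed.
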